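(* Let $k\in\mathbb N$, $f=\lambda z+\mathrm{h.o.t.}\in\mathcal L_k$ with $0<\lambda<1$, and let $\beta>1$. Define $W_1\subseteq\mathbb R\times\mathbb Z^k$ as the additive semigroup generated by $$\mathrm{Supp}(f)\cup\{(\alpha-1,\boldsymbol m):(\alpha,\boldsymbol m)\in\mathrm{Supp}(f-\lambda\,\mathrm{id})\}\cup\{(0,1,0,\dots,0),\dots,(0,\dots,0,1)\},$$ inductively $W_{n+1}$ as the additive semigroup generated by $$W_n\cup\{(\beta_1,\boldsymbol m_1)+\cdots+(\beta_{n+1},\boldsymbol m_{n+1})-(n,\mathbf 0_k):(\beta_i,\boldsymbol m_i)\in W_n,\ \beta_i>1\},$$ and set $W:=\bigcup_{n\ge1}W_n$, $W_\beta:=W\cap(\mathbb R_{\ge\beta}\times\mathbb Z^k)$. Then $W_\beta$ is well-ordered (for the lexicographic order) and for every $m\ge2$ and all $(\beta_1,\boldsymbol m_1),\dots,(\beta_m,\boldsymbol m_m)\in W_\beta$, $$(\beta_1,\boldsymbol m_1)+\cdots+(\beta_m,\boldsymbol m_m)-(m-1,\mathbf 0_k)\in W_\beta.$$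
   Context: $z$ infinitesimal; $\boldsymbol\ell_1:=-1/\ln z$, $\boldsymbol\ell_{j+1}:=\boldsymbol\ell_j\circ\boldsymbol\ell_1$. $\mathcal L_k$: formal sums $\sum a_{\alpha,n_1,\dots,n_k}z^\alpha\boldsymbol\ell_1^{n_1}\cdots\boldsymbol\ell_k^{n_k}$, real coefficients, well-ordered support $\mathrm{Supp}(f)$ in $\mathbb R_{\ge0}\times\mathbb Z^k$ (lexicographic order). The vectors $(0,1,0,\dots,0),\dots,(0,\dots,0,1)$ are the unit vectors of $\mathbb R\times\mathbb Z^k$ in the $\mathbb Z^k$ coordinates; $\mathbf 0_k=(0,\dots,0)\in\mathbb Z^k$. *)

From HB Require Import structures.
From mathcomp Require Import all_boot all_order all_algebra.
From mathcomp Require Import reals.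
Set Implicit Arguments. Unset Strict Implicit. Unset Printing Implicit Defensive.
Import Order.TTheory GRing.Theory Num.Theory.
Local Open Scope ring_scope.

(* Exponents (alpha, n_1, ..., n_k) live in R x Z^k, modelled as R * 'rV[int]_k
   (an additive group: componentwise addition). *)
Definition expo (R : realType) (k : nat) := (R * 'rV[int]_k)%type.

Definition vec_lexlt (k : nat) (u v : 'rV[int]_k) : Prop :=
  exists i : 'I_k, (forall j : 'I_k, (j < i)%N -> u ord0 j = v ord0 j) /\ u ord0 i < v ord0 i.

Definition lexlt (R : realType) (k : nat) (p q : expo R k) : Prop :=
  p.1 < q.1 \/ (p.1 = q.1 /\ vec_lexlt p.2 q.2).
Definition lexle (R : realType) (k : nat) (p q : expo R k) : Prop :=
  p = q \/ lexlt p q.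

Definition well_ordered (R : realType) (k : nat) (X : expo R k -> Prop) : Prop :=
  forall A : expo R k -> Prop, (forall x, A x -> X x) -> (exists x, A x) ->
    exists x, A x /\ forall y, A y -> lexle x y.

(* A formal sum  sum a_{alpha,n} z^alpha l_1^{n_1} ... l_k^{n_k}  is given by its
   coefficient function; its support. *)
Definition Supp (R : realType) (k : nat) (c : R -> 'rV[int]_k -> R) : expo R k -> Prop :=
  fun p => c p.1 p.2 != 0.

Definition in_Lk (R : realType) (k : nat) (c : R -> 'rV[int]_k -> R) : Prop :=
  (forall p, Supp c p -> 0 <= p.1) /\ well_ordered (Supp c).

Definition e_z (R : realType) (k : nat) : expo R k := (1, 0).

(* f = lambda z + h.o.t.: coefficient of z is lambda and every other exponent in
   the support is lexicographically larger than (1, 0). *)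
Definition leading_lambda_z (R : realType) (k : nat) (c : R -> 'rV[int]_k -> R)
    (lam : R) : Prop :=
  c 1 0 = lam /\ forall p, Supp c p -> p <> e_z R k -> lexlt (e_z R k) p.

Definition sub_lambda_id (R : realType) (k : nat) (c : R -> 'rV[int]_k -> R) (lam : R)
  : R -> 'rV[int]_k -> R :=
  fun a m => c a m - (if (a == 1) && (m == 0) then lam else 0).

Inductive sgroup_gen (R : realType) (k : nat) (S : expo R k -> Prop) : expo R k -> Prop :=
  | sg_base x : S x -> sgroup_gen S x
  | sg_add x y : sgroup_gen S x -> sgroup_gen S y -> sgroup_gen S (x + y).

Definition unit_expo (R : realType) (k : nat) (i : 'I_k) : expo R k := (0, delta_mx 0 i).

Definition W1_gens (R : realType) (k : nat) (c : R -> 'rV[int]_k -> R) (lam : R)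
  : expo R k -> Prop :=
  fun p => Supp c p
        \/ (exists q, Supp (sub_lambda_id c lam) q /\ p = (q.1 - 1, q.2))
        \/ (exists i : 'I_k, p = @unit_expo R k i).

Definition step_set (R : realType) (k : nat) (n : nat) (X : expo R k -> Prop)
  : expo R k -> Prop :=
  fun p => exists b : 'I_n.+1 -> expo R k,
      (forall i, X (b i) /\ 1 < (b i).1) /\
      p = \sum_(i < n.+1) b i - (n%:R, 0).

(* Wseq c lam n = W_{n+1}. *)
Fixpoint Wseq (R : realType) (k : nat) (c : R -> 'rV[int]_k -> R) (lam : R) (n : nat)
  : expo R k -> Prop :=
  match n with
  | O => sgroup_gen (W1_gens c lam)
  | S n' => sgroup_gen (fun p => Wseq c lam n' p \/ step_set n'.+1 (Wseq c lam n') p)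
  end.

Definition W (R : realType) (k : nat) (c : R -> 'rV[int]_k -> R) (lam : R)
  : expo R k -> Prop := fun p => exists n, Wseq c lam n p.

Definition Wbeta (R : realType) (k : nat) (c : R -> 'rV[int]_k -> R) (lam beta : R)
  : expo R k -> Prop := fun p => W c lam p /\ beta <= p.1.

From HB Require Import structures.
From mathcomp Require Import all_boot all_order all_algebra.
From mathcomp Require Import reals.
From Stdlib Require Import ClassicalEpsilon Wf_nat.
Import Order.TTheory GRing.Theory Num.Theory.
Local Open Scope ring_scope.
Set Implicit Arguments. Unset Strict Implicit.

(* The lexicographic order on R x Z^k is a total order
   compatible with addition.  Neumann's lemma (proved with Nash-Williams'
   minimal bad sequence argument) says that the finite sums of a well-ordered
   set of positive exponents form a well-ordered set.  The generators of W_1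
   are positive and well-ordered (the support of f, its translate by -(1, 0)
   and finitely many unit vectors), hence so is W_1, and hence so is the set
   of "atoms": the generators of W_1, (1, 0), and y - (1, 0) for y in W_1
   beyond 1.  By induction on n every element of W_n is a finite sum of atoms,
   so W, and a fortiori W_beta, is well-ordered.

   Writing every element of W beyond 1 as a "chain"
   b_1 + ... + b_j - (j - 1, 0) (with b_i in W_(j-1)) plus an element of W,
   and merging two chains into one, shows that W is closed under
   (x, y) |-> x + y - (1, 0) on exponents beyond 1; the m-fold closure of
   W_beta follows by induction on m since beta > 1. *)

Section LexOrder.
Variables (R : realType) (k : nat).
Implicit Types (u v w : 'rV[int]_k) (p q r : expo R k).

Lemma vec_lexlt_irrefl u : ~ vec_lexlt u u.
Proof. by case=> i [_]; rewrite ltxx. Qed.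

Lemma vec_lexlt_trans u v w : vec_lexlt u v -> vec_lexlt v w -> vec_lexlt u w.
Proof.
case=> i [eq_uv lt_uv] [j [eq_vw lt_vw]].
case: (ltngtP i j) => [ij|ji|/val_inj ij].
- exists i; split; last by rewrite -(eq_vw i ij).
  by move=> l li; rewrite eq_uv // eq_vw //; apply: ltn_trans li ij.
- exists j; split; last by rewrite eq_uv.
  by move=> l lj; rewrite eq_uv ?eq_vw //; apply: ltn_trans lj ji.
- subst j; exists i; split; first by move=> l li; rewrite eq_uv ?eq_vw.
  exact: lt_trans lt_uv lt_vw.
Qed.

Lemma vec_lexltD2r u v w : vec_lexlt u v -> vec_lexlt (u + w) (v + w).
Proof.
case=> i [eq_uv lt_uv]; exists i; split; last by rewrite !mxE ltrD2r.
by move=> j ji; rewrite !mxE eq_uv.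
Qed.

(* Trichotomy: compare at the first coordinate where u and v differ. *)
Lemma vec_lexlt_total u v : u = v \/ vec_lexlt u v \/ vec_lexlt v u.
Proof.
have [/existsP ex_diff|/existsPn all_eq] :=
  boolP [exists j : 'I_k, u ord0 j != v ord0 j]; last first.
  left; apply/rowP => j; move/negPn/eqP: (all_eq j).
  by have -> : (0 : 'I_1) = ord0 by apply: val_inj.
pose P n := [exists j : 'I_k, (val j == n) && (u ord0 j != v ord0 j)].
have exP : exists n, P n.
  by case: ex_diff => j neq; exists (val j); apply/existsP; exists j; rewrite eqxx.
case: (ex_minnP exP) => n /existsP [j /andP [/eqP jn neq]] minn.
have eq_before (l : 'I_k) : (l < j)%N -> u ord0 l = v ord0 l.
  move=> lj; apply/eqP/negPn/negP => neq_l.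
  have /minn : P l by apply/existsP; exists l; rewrite eqxx neq_l.
  by rewrite -jn leqNgt lj.
right; case: (ltgtP (u ord0 j) (v ord0 j)) => [lt|gt|eq].
- by left; exists j.
- by right; exists j; split => // l lj; rewrite eq_before.
- by rewrite eq eqxx in neq.
Qed.

Lemma lexlt_irrefl p : ~ lexlt p p.
Proof. by case; [rewrite ltxx | case=> _ /vec_lexlt_irrefl]. Qed.

Lemma lexlt_trans p q r : lexlt p q -> lexlt q r -> lexlt p r.
Proof.
case=> [lt1|[eq1 lt1]] [lt2|[eq2 lt2]].
- by left; apply: lt_trans lt1 lt2.
- by left; rewrite -eq2.
- by left; rewrite eq1.
- by right; split; [rewrite eq1 | apply: vec_lexlt_trans lt1 lt2].
Qed.

Lemma lexltD2r p q r : lexlt p q -> lexlt (p + r) (q + r).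
Proof.
case=> [lt|[eq lt]]; first by left; rewrite /= ltrD2r.
by right; split; [rewrite /= eq | exact: vec_lexltD2r].
Qed.

Lemma lexlt_total p q : p = q \/ lexlt p q \/ lexlt q p.
Proof.
case: (ltgtP p.1 q.1) => [lt|gt|eq1]; [by right; left; left|by right; right; left|].
case: (vec_lexlt_total p.2 q.2) => [eq2|[lt|gt]].
- by left; case: p q eq1 eq2 => [a b] [c d] /= -> ->.
- by right; left; right.
- by right; right; right.
Qed.

Lemma lexle_trans p q r : lexle p q -> lexle q r -> lexle p r.
Proof. by case=> [->|lt1] // [<-|lt2]; right => //; apply: lexlt_trans lt1 lt2. Qed.

Lemma lexlt_le_trans p q r : lexlt p q -> lexle q r -> lexlt p r.
Proof. by move=> lt1 [<-|lt2] //; apply: lexlt_trans lt1 lt2. Qed.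

Lemma lexle_or_gt p q : lexle p q \/ lexlt q p.
Proof. by case: (lexlt_total p q) => [->|[lt|gt]]; [left; left|left; right|right]. Qed.

Lemma lexlt_not_ge p q : lexlt q p -> ~ lexle p q.
Proof. by move=> lt le; apply: (lexlt_irrefl (lexlt_le_trans lt le)). Qed.

Lemma lexleD2r p q r : lexle p q -> lexle (p + r) (q + r).
Proof. by case=> [->|lt]; [left | right; apply: lexltD2r]. Qed.

Lemma lexlt_leD p q r s : lexlt p q -> lexle r s -> lexlt (p + r) (q + s).
Proof.
move=> lt le; apply: (lexlt_le_trans (q := q + r)); first exact: lexltD2r.
by rewrite ![q + _]addrC; apply: lexleD2r.
Qed.

Lemma lexlt_addl_cancel p q r s : lexlt (p + r) (q + s) -> lexle q p -> lexlt r s.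
Proof.
move=> lt le; have le_opp : lexle (- p) (- q).
  by have := lexleD2r (- q - p) le; rewrite addrA subrr add0r addrCA subrr addr0.
by have := lexlt_leD lt le_opp; rewrite [p + r]addrC [q + s]addrC !addrK.
Qed.

Lemma lexlt_addl_pos p q : lexlt 0 p -> lexlt q (p + q).
Proof. by move=> /(lexltD2r q); rewrite add0r. Qed.

End LexOrder.

Section WellOrdered.
Variables (R : realType) (k : nat).
Implicit Types (X Y : expo R k -> Prop).

Lemma wo_sub X Y : (forall x, Y x -> X x) -> well_ordered X -> well_ordered Y.
Proof. by move=> YX woX A AY; apply: woX => x /AY /YX. Qed.

(* Union of two well-ordered sets: compare the least elements coming from
   each part. *)
Lemma wo_union X Y : well_ordered X -> well_ordered Y -> well_ordered (fun x => X x \/ Y x).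
Proof.
move=> woX woY A AXY [a Aa].
have least Z : well_ordered Z -> (exists x, A x /\ Z x) ->
    exists x, A x /\ forall y, A y -> Z y -> lexle x y.
  move=> woZ exZ; have AZ_Z x : A x /\ Z x -> Z x by case.
  have [x [[Ax _] min_x]] := woZ _ AZ_Z exZ.
  by exists x; split => // y Ay Zy; apply: min_x.
have [exX|noX] := classic (exists x, A x /\ X x); last first.
  have AY y : A y -> Y y by move=> Ay; case: (AXY y Ay) => // Xy; case: noX; exists y.
  have [y [Ay min_y]] := least Y woY (ex_intro _ a (conj Aa (AY a Aa))).
  by exists y; split => // z Az; apply/min_y/AY.
have [x [Ax min_x]] := least X woX exX.
have [exY|noY] := classic (exists y, A y /\ Y y); last first.
  exists x; split => // z Az; case: (AXY z Az) => [|Yz]; first exact: min_x.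
  by case: noY; exists z.
have [y [Ay min_y]] := least Y woY exY.
have [xy|yx] := lexle_or_gt x y; [exists x | exists y]; split => // z Az.
  by case: (AXY z Az) => [/(min_x z Az) // | /(min_y z Az)]; apply: lexle_trans.
by case: (AXY z Az) => [/(min_x z Az) | /(min_y z Az) //]; apply: lexle_trans; right.
Qed.

Lemma wo_seq (s : seq (expo R k)) : well_ordered (fun x => x \in s).
Proof.
elim: s => [|a s IH]; first by move=> A As [x /As].
have wo_a : well_ordered (fun x => x = a).
  by move=> A Aa [x Ax]; exists x; split => // y Ay; rewrite (Aa _ Ax) (Aa _ Ay); left.
apply: (wo_sub _ (wo_union wo_a IH)) => x.
by rewrite in_cons => /orP [/eqP|]; [left | right].
Qed.

Lemma wo_shift X t : well_ordered X -> well_ordered (fun y => X (y + t)).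
Proof.
move=> woX A AX [a Aa].
have AtX x : A (x - t) -> X x by move/AX; rewrite subrK.
have exAt : exists x, A (x - t) by exists (a + t); rewrite addrK.
have [x [Ax min_x]] := woX _ AtX exAt.
exists (x - t); split => // y Ay.
have Ayt : A (y + t - t) by rewrite addrK.
by have := lexleD2r (- t) (min_x _ Ayt); rewrite addrK.
Qed.

Lemma wo_no_descending X :
  (forall s : nat -> expo R k, (forall n, X (s n)) -> ~ forall n, lexlt (s n.+1) (s n)) ->
  well_ordered X.
Proof.
move=> noseq A AX [a Aa]; apply: NNPP => no_min.
have below (x : {x | A x}) : exists y : {y | A y}, lexlt (sval y) (sval x).
  case: x => x Ax; apply: NNPP => no_below; apply: no_min; exists x; split => // y Ay.
  by have [|lt] // := lexle_or_gt x y; case: no_below; exists (exist _ y Ay).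
pose next x := sval (constructive_indefinite_description _ (below x)).
pose s n := iter n next (exist _ a Aa).
apply: (noseq (fun n => sval (s n))) => [n|n]; first exact/AX/(svalP (s n)).
by rewrite /s iterS; apply: (svalP (constructive_indefinite_description _ (below _))).
Qed.

(* Every sequence in a well-ordered set has a nondecreasing subsequence: take
   repeatedly the position of the least term of the remaining tail. *)
Lemma wo_nondecreasing_subseq X (g : nat -> expo R k) :
  well_ordered X -> (forall n, X (g n)) ->
  exists phi : nat -> nat, forall j, (phi j < phi j.+1)%N /\ lexle (g (phi j)) (g (phi j.+1)).
Proof.
move=> woX Xg.
have tail_min i : exists n, (i < n)%N /\ forall m, (i < m)%N -> lexle (g n) (g m).
  have tailX x : (exists m, (i < m)%N /\ x = g m) -> X x by move=> [m [_ ->]].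
  have ex_tail : exists x, exists m, (i < m)%N /\ x = g m by exists (g i.+1), i.+1.
  have [x [[n [lt ->]] min_n]] := woX _ tailX ex_tail.
  by exists n; split => // m im; apply: min_n; exists m.
pose psi i := sval (constructive_indefinite_description _ (tail_min i)).
have psiP i := svalP (constructive_indefinite_description _ (tail_min i)).
exists (fun j => iter j.+1 psi 0%N) => j /=; set a := iter j psi 0%N.
have [lt_a _] := psiP a; have [lt_psia _] := psiP (psi a).
by split => //; apply: (proj2 (psiP a)); apply: ltn_trans lt_a lt_psia.
Qed.

End WellOrdered.

Section Neumann.
Variables (R : realType) (k : nat).
Implicit Types (H : expo R k -> Prop) (l : seq (expo R k)) (s t : nat -> seq (expo R k)).

Definition ssum l : expo R k := \sum_(y <- l) y.

Definition sums_of H : expo R k -> Prop :=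
  fun x => exists l, (forall y, y \in l -> H y) /\ x = ssum l.

Lemma sums_of_base H x : H x -> sums_of H x.
Proof.
move=> Hx; exists [:: x]; split; last by rewrite /ssum big_seq1.
by move=> y; rewrite inE => /eqP ->.
Qed.

Lemma sums_ofD H x y : sums_of H x -> sums_of H y -> sums_of H (x + y).
Proof.
move=> [l1 [H1 ->]] [l2 [H2 ->]]; exists (l1 ++ l2); split; last by rewrite /ssum big_cat.
by move=> z; rewrite mem_cat => /orP [/H1|/H2].
Qed.

Lemma sums_of_sum H n (f : 'I_n.+1 -> expo R k) :
  (forall i, sums_of H (f i)) -> sums_of H (\sum_(i < n.+1) f i).
Proof.
elim: n f => [|n IH] f Hf; first by rewrite big_ord1.
by rewrite big_ord_recr; apply: sums_ofD => //; apply: IH.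
Qed.

Lemma ssum_ge0 l : (forall y, y \in l -> lexlt 0 y) -> lexle 0 (ssum l).
Proof.
elim: l => [|a l IH] pos; first by rewrite /ssum big_nil; left.
rewrite /ssum big_cons -/(ssum l); right; rewrite -[X in lexlt X _](addr0 0).
by apply: lexlt_leD; [apply: pos; rewrite mem_head | apply: IH => y yl; apply: pos; rewrite in_cons yl orbT].
Qed.

Definition bad_seq H s :=
  (forall n y, y \in s n -> H y) /\ forall n, lexlt (ssum (s n.+1)) (ssum (s n)).

Definition agree_below (n : nat) s t := forall i, (i < n)%N -> s i = t i.

Lemma bad_seq_decreasing H s m n : bad_seq H s -> (m < n)%N -> lexlt (ssum (s n)) (ssum (s m)).
Proof.
move=> [_ dec]; elim: n => // n IH; rewrite ltnS leq_eqVlt => /orP [/eqP ->|lt].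
  exact: dec.
exact: lexlt_trans (dec n) (IH lt).
Qed.

Lemma bad_seq_min_extension H s n : bad_seq H s -> exists t, bad_seq H t /\ agree_below n t s /\
  forall u, bad_seq H u -> agree_below n u s -> (size (t n) <= size (u n))%N.
Proof.
move=> bad_s.
pose P m := exists t, bad_seq H t /\ agree_below n t s /\ size (t n) = m.
have exP : exists m, P m by exists (size (s n)), s.
have [m [[[t [bad_t [agree_t <-]]] min_m] _]] :=
  dec_inh_nat_subset_has_unique_least_element P (fun m => classic (P m)) exP.
exists t; do 2!split=> //; move=> u bad_u agree_u; apply/ssrnat.leP/min_m; by exists u.
Qed.

(* Nash-Williams' minimal bad sequence: each word is as short as possible given
   the previous ones.  It is the diagonal limit of the successive minimal
   extensions T n, which agree with each other on longer and longer prefixes. *)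
Lemma min_bad_seq H s0 : bad_seq H s0 -> exists m, bad_seq H m /\
  forall n s, bad_seq H s -> agree_below n s m -> (size (m n) <= size (s n))%N.
Proof.
move=> bad0.
pose Bad := {s | bad_seq H s}.
have ext (s : Bad) n := bad_seq_min_extension n (svalP s).
pose F (s : Bad) n : Bad :=
  let e := constructive_indefinite_description _ (ext s n) in exist _ (sval e) (proj1 (svalP e)).
have FP (b : Bad) n := proj2 (svalP (constructive_indefinite_description _ (ext b n))).
pose fix T n := match n with 0 => F (exist _ s0 bad0) 0 | n'.+1 => F (T n') n'.+1 end.
have T_agree n : agree_below n.+1 (sval (T n.+1)) (sval (T n)) by case: (FP (T n) n.+1).
have T_stable n j : (n <= j)%N -> sval (T j) n = sval (T n) n.
  elim: j => [|j IH]; first by rewrite leqn0 => /eqP ->.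
  by rewrite leq_eqVlt => /orP [/eqP -> //|lt]; rewrite T_agree // IH.
exists (fun n => sval (T n) n); split.
  split=> [n y|n]; first exact: (proj1 (svalP (T n)) n y).
  by rewrite -(T_stable n n.+1) //; apply: (proj2 (svalP (T n.+1))).
case=> [|n] s bad_s agree_s; first exact: (proj2 (FP _ 0%N) s bad_s).
apply: (proj2 (FP (T n) n.+1) s bad_s) => i lt.
by rewrite agree_s // T_stable // -ltnS.
Qed.

(* From a descending sequence of sums take a minimal
   bad sequence, extract a nondecreasing subsequence of first letters and drop
   those letters: the result is a bad sequence contradicting minimality. *)
Lemma neumann H : (forall h, H h -> lexlt 0 h) -> well_ordered H -> well_ordered (sums_of H).
Proof.
move=> pos woH; apply: wo_no_descending => x in_sums dec.
pose word n := sval (constructive_indefinite_description _ (in_sums n)).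
have wordP n := svalP (constructive_indefinite_description _ (in_sums n)).
have bad_word : bad_seq H word.
  split=> [n y|n]; first by case: (wordP n) => Hw _; apply: Hw.
  by case: (wordP n) => _ <-; case: (wordP n.+1) => _ <-.
have [m [bad_m min_m]] := min_bad_seq bad_word.
have m_neq0 n : m n != [::].
  apply/eqP => mn0; have := proj2 bad_m n; rewrite mn0 /ssum big_nil => lt.
  by apply: (lexlt_not_ge lt); apply: ssum_ge0 => y /(proj1 bad_m n.+1) /pos.
pose g n := head 0 (m n).
have mE n : m n = g n :: behead (m n) by rewrite /g; case: (m n) (m_neq0 n).
have ssumE n : ssum (m n) = g n + ssum (behead (m n)) by rewrite {1}mE /ssum big_cons.
have Hg n : H (g n) by apply: (proj1 bad_m n); rewrite mE mem_head.
have [phi phiP] := wo_nondecreasing_subseq woH Hg.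
pose N := phi 0%N.
pose s i := if (i < N)%N then m i else behead (m (phi (i - N)%N)).
have bad_s : bad_seq H s.
  split=> [n y|n]; rewrite /s.
    case: ifP => _ y_in; first exact: (proj1 bad_m n y y_in).
    by apply: (proj1 bad_m (phi (n - N)%N) y); rewrite mE in_cons y_in orbT.
  case: (ltngtP n.+1 N) => [lt|gt|eq]; first exact: (proj2 bad_m n).
    rewrite subSn; last by rewrite -ltnS.
    have [lt_phi le_g] := phiP (n - N)%N.
    by apply: lexlt_addl_cancel le_g; rewrite -!ssumE; apply: bad_seq_decreasing bad_m lt_phi.
  rewrite eq subnn -/N; apply: (lexlt_trans (q := ssum (m N))).
    by rewrite [X in lexlt _ X]ssumE; apply/lexlt_addl_pos/pos.
  by rewrite -eq; apply: (proj2 bad_m n).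
have agree_s : agree_below N s m by move=> i lt; rewrite /s lt.
by have := min_m N s bad_s agree_s; rewrite /s ltnn subnn -/N [X in (size X <= _)%N]mE /= ltnn.
Qed.

End Neumann.

Section ExponentArithmetic.
Variables (R : realType) (k : nat).

Lemma expo_eq (x y : expo R k) : x.1 = y.1 -> x.2 = y.2 -> x = y.
Proof. by case: x y => [a b] [c d] /= -> ->. Qed.

Lemma fst_sum n (b : 'I_n -> expo R k) : (\sum_(i < n) b i).1 = \sum_(i < n) (b i).1.
Proof. exact: (big_morph fst (id1 := 0) (op1 := +%R)). Qed.

Lemma natr_expo n : ((n%:R : R), (0 : 'rV[int]_k)) = e_z R k *+ n.
Proof.
elim: n => [|n IH]; first by rewrite mulr0n.
by rewrite [RHS]mulrSr -IH; apply: expo_eq; rewrite /= ?natr1 ?addr0.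
Qed.

Lemma shifted_sum_gt1 n (b : 'I_n.+1 -> expo R k) :
  (forall i, 1 < (b i).1) -> 1 < (\sum_(i < n.+1) b i - (n%:R, 0)).1.
Proof.
move=> gt1; rewrite /= fst_sum ltrBrDl natr1.
have := ltr_sum (r := index_enum 'I_n.+1) (P := xpredT) (F := fun _ => 1) (G := fun i => (b i).1).
rewrite sumr_const card_ord; apply=> [|i _]; last exact: gt1.
by apply/hasP; exists ord0; rewrite ?mem_index_enum.
Qed.

End ExponentArithmetic.

Section WStructure.
Variables (R : realType) (k : nat) (c : R -> 'rV[int]_k -> R) (lam : R).
Hypothesis in_Lk_c : in_Lk c.
Hypothesis lead_c : leading_lambda_z c lam.
Implicit Types (x y : expo R k).

Lemma WseqD n x y : Wseq c lam n x -> Wseq c lam n y -> Wseq c lam n (x + y).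
Proof. by case: n => [|n]; apply: sg_add. Qed.

Lemma Wseq_mono m n x : (m <= n)%N -> Wseq c lam m x -> Wseq c lam n x.
Proof.
move=> le_mn Wx; elim: n le_mn => [|n IH]; first by rewrite leqn0 => /eqP <-.
by rewrite leq_eqVlt => /orP [/eqP <- //|lt]; apply: sg_base; left; apply: IH.
Qed.

Lemma WD x y : W c lam x -> W c lam y -> W c lam (x + y).
Proof.
move=> [n Wx] [m Wy]; exists (maxn n m).
by apply: WseqD; [apply: Wseq_mono Wx; rewrite leq_maxl | apply: Wseq_mono Wy; rewrite leq_maxr].
Qed.

Lemma Supp_sub_lambda_id q :
  Supp (sub_lambda_id c lam) q -> Supp c q /\ q <> e_z R k.
Proof.
case: lead_c => [c1 _]; rewrite /Supp /sub_lambda_id.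
case: q => a m /=; case: (boolP ((a == 1) && (m == 0))) => [/andP [/eqP -> /eqP ->]|not_z].
  by rewrite c1 subrr eqxx.
by rewrite subr0 => Sq; split => // -[ea em]; rewrite ea em !eqxx in not_z.
Qed.

(* The generators of W_1 are lexicographically positive: the support of f lies
   beyond z, so that of (f - lambda id)/z lies beyond 0. *)
Lemma W1_gens_pos p : W1_gens c lam p -> lexlt 0 p.
Proof.
have ez_pos : lexlt 0 (e_z R k) by left; rewrite /= ltr01.
case=> [Sp|[[q [Sq ->]]|[i ->]]].
- have [->//|ne] := classic (p = e_z R k).
  exact: lexlt_trans ez_pos (proj2 lead_c p Sp ne).
- have [Sq' ne] := Supp_sub_lambda_id Sq.
  have := lexltD2r (- e_z R k) (proj2 lead_c q Sq' ne); rewrite subrr.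
  by have -> : (q.1 - 1, q.2) = q - e_z R k by apply: expo_eq; rewrite //= subr0.
- right; split => //; exists i; split; last by rewrite !mxE !eqxx.
  by move=> j lt; rewrite !mxE /= -val_eqE (ltn_eqF lt).
Qed.

Lemma lexlt0_fst_ge0 x : lexlt 0 x -> 0 <= x.1.
Proof. by case=> [/ltW|[<-]]. Qed.

Lemma Wseq_fst_ge0 n x : Wseq c lam n x -> 0 <= x.1.
Proof.
elim: n x => [|n IH] x /=.
  by elim=> [y /W1_gens_pos /lexlt0_fst_ge0 //|y z _ y0 _ z0]; rewrite addr_ge0.
elim=> [y [/IH //|[b [Hb ->]]]|y z _ y0 _ z0]; last by rewrite addr_ge0.
exact/ltW/lt_trans/(shifted_sum_gt1 (fun i => proj2 (Hb i))).
Qed.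

(* No element of first coordinate at most 1 appears after W_1: every new
   generator exceeds 1 and all exponents are nonnegative. *)
Lemma Wseq_fst_le1 n x : Wseq c lam n x -> x.1 <= 1 -> Wseq c lam 0 x.
Proof.
elim: n x => [//|n IH] x /=.
elim=> [y [/IH //|[b [Hb ->]]]|y z Wy IHy Wz IHz] le1.
  by have := shifted_sum_gt1 (fun i => proj2 (Hb i)); rewrite ltNge le1.
have y0 := Wseq_fst_ge0 (n := n.+1) Wy; have z0 := Wseq_fst_ge0 (n := n.+1) Wz.
rewrite /= in le1; apply: sg_add; [apply: IHy | apply: IHz].
  by apply: le_trans le1; rewrite lerDl.
by apply: le_trans le1; rewrite lerDr.
Qed.


(* Chains of length j >= 2 are generators of W_j, and
   the length bounds the level of the summands so that chains can be merged. *)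
Definition W_chain (j : nat) x :=
  (0 < j)%N /\ exists b : 'I_j -> expo R k,
    (forall i, Wseq c lam j.-2 (b i) /\ 1 < (b i).1) /\ x = \sum_(i < j) b i - e_z R k *+ j.-1.

Lemma W_chain1 x : Wseq c lam 0 x -> 1 < x.1 -> W_chain 1 x.
Proof.
move=> Wx gt1; split => //; exists (fun _ => x); split => //.
by rewrite big_ord1 mulr0n subr0.
Qed.

Lemma W_chain_in_W j x : W_chain j x -> W c lam x.
Proof.
case: j => [[//]|[|j]] [_ [b [Hb ->]]].
  by exists 0%N; rewrite big_ord1 mulr0n subr0; case: (Hb ord0).
by exists j.+1; apply: sg_base; right; exists b; split; rewrite // natr_expo.
Qed.

(* Merging chains: concatenating the families, lifted to the common level. *)
Lemma W_chain_merge j l x y :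
  W_chain j x -> W_chain l y -> W_chain (j + l) (x + y - e_z R k).
Proof.
case: j => [[//]|j] [_ [b [Hb ->]]]; case: l => [[//]|l] [_ [b' [Hb' ->]]].
split; first by rewrite addn_gt0.
pose bb i := match split i with inl a => b a | inr a => b' a end.
exists bb; split.
  move=> i; rewrite /bb; case: (split i) => a; [case: (Hb a) | case: (Hb' a)] => Wa gt1;
    split => //; apply: Wseq_mono Wa; rewrite -!subn2 leq_sub2r //.
    exact: leq_addr.
  by rewrite addSn; apply: leq_trans (leq_addl j _) _.
have sum_bb : \sum_(i < j.+1 + l.+1) bb i = \sum_(i < j.+1) b i + \sum_(i < l.+1) b' i.
  rewrite big_split_ord /bb; congr (_ + _); apply: eq_bigr => i _.
    by have := unsplitK (inl _ i : 'I_j.+1 + 'I_l.+1) => /= ->.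
  by have := unsplitK (inr _ i : 'I_j.+1 + 'I_l.+1) => /= ->.
rewrite sum_bb addnS mulrSr mulrnDr !opprD !addrA; congr (_ - _ - _).
by rewrite addrAC.
Qed.

Lemma W_chain_decomposition n x : Wseq c lam n x -> 1 < x.1 ->
  exists j s w, W_chain j s /\ (w = 0 \/ W c lam w) /\ x = s + w.
Proof.
elim: n x => [|n IH] x Wx gt1.
  by exists 1%N, x, 0; split; [exact: W_chain1 | split; [left | rewrite addr0]].
have W_Wsn y : Wseq c lam n.+1 y -> W c lam y by exists n.+1.
elim: Wx gt1 => [y [Wy|[b [Hb ->]]]|y z Wy IHy Wz IHz] gt1; first exact: IH.
  exists n.+2, (\sum_(i < n.+2) b i - (n.+1%:R, 0)), 0.
  by split; [split => //; exists b; rewrite natr_expo | split; [left | rewrite addr0]].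
have add_W w u : w = 0 \/ W c lam w -> W c lam u -> w + u = 0 \/ W c lam (w + u).
  by move=> [-> | Ww] Wu; right; rewrite ?add0r //; apply: WD.
have [y_gt1|y_le1] := ltrP 1 y.1.
  have [j [s [w [chain [Ww ->]]]]] := IHy y_gt1.
  by exists j, s, (w + z); split => //; split; [apply: add_W; last apply: W_Wsn | rewrite addrA].
have [z_gt1|z_le1] := ltrP 1 z.1.
  have [j [s [w [chain [Ww ->]]]]] := IHz z_gt1.
  exists j, s, (w + y); split => //.
  by split; [apply: add_W; last apply: W_Wsn | rewrite addrC -addrA].
exists 1%N, (y + z), 0; split; last by split; [left | rewrite addr0].
by apply: W_chain1 => //; apply: sg_add; apply: (Wseq_fst_le1 (n := n.+1)).
Qed.

Lemma W_closed_shifted_add x y : W c lam x -> W c lam y -> 1 < x.1 -> 1 < y.1 ->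
  W c lam (x + y - e_z R k).
Proof.
move=> [n Wx] [m Wy] x_gt1 y_gt1.
have [j [s [w [chain_s [Ww ->]]]]] := W_chain_decomposition Wx x_gt1.
have [j' [s' [w' [chain_s' [Ww' ->]]]]] := W_chain_decomposition Wy y_gt1.
have W_ss' := W_chain_in_W (W_chain_merge chain_s chain_s').
have -> : s + w + (s' + w') - e_z R k = (s + s' - e_z R k) + (w + w').
  by rewrite [in LHS]addrACA [LHS]addrAC.
by case: Ww => [->|Ww]; case: Ww' => [->|Ww']; rewrite ?add0r ?addr0 //; apply: WD => //; apply: WD.
Qed.


Lemma W1_gens_wo : well_ordered (W1_gens c lam).
Proof.
have [_ wo_supp] := in_Lk_c.
have wo_units := wo_seq (s := [seq unit_expo R i | i <- enum 'I_k]).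
apply: (wo_sub _ (wo_union wo_supp (wo_union (wo_shift (t := e_z R k) wo_supp) wo_units))).
move=> p [Sp|[[q [Sq ->]]|[i ->]]]; [by left | right; left | by right; right; apply: map_f; rewrite mem_enum].
have -> : (q.1 - 1, q.2) + e_z R k = q by apply: expo_eq; rewrite /= ?subrK ?addr0.
exact: (Supp_sub_lambda_id Sq).1.
Qed.

Lemma W1_sums_of_gens x : Wseq c lam 0 x -> sums_of (W1_gens c lam) x.
Proof. by elim=> [y|y z _ Sy _ Sz]; [apply: sums_of_base | apply: sums_ofD]. Qed.

(* Atoms of W: every element of W, and every element beyond 1 shifted back by
   (1, 0), is a finite sum of atoms. *)
Definition W_atoms : expo R k -> Prop := fun x =>
  W1_gens c lam x \/ x = e_z R k \/ exists y, Wseq c lam 0 y /\ 1 < y.1 /\ x = y - e_z R k.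

Lemma W_atoms_pos x : W_atoms x -> lexlt 0 x.
Proof.
case=> [/W1_gens_pos //|[->|[y [_ [gt1 ->]]]]]; left; rewrite /= ?ltr01 //.
by rewrite subr_gt0.
Qed.

(* The atoms are well-ordered by Neumann's lemma applied to W_1. *)
Lemma W_atoms_wo : well_ordered W_atoms.
Proof.
have wo_W1 := wo_shift (t := e_z R k) (neumann W1_gens_pos W1_gens_wo).
have wo_ez : well_ordered (fun x => x \in [:: e_z R k]) := wo_seq (s := _).
apply: (wo_sub _ (wo_union W1_gens_wo (wo_union wo_ez wo_W1))).
move=> x [G|[->|[y [Wy [_ ->]]]]]; [by left | by right; left; rewrite mem_head | right; right].
by rewrite subrK; apply: W1_sums_of_gens.
Qed.

(* A generator of W_(n+2) is b_0 + ... + b_(n+1) - (n+1, 0) = (1, 0) + sum of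
   (b_i - (1, 0)); a sum x = y + z beyond 1 either has a summand beyond 1 or
   lies in W_1. *)
Lemma Wseq_sums_of_atoms n x : Wseq c lam n x ->
  sums_of W_atoms x /\ (1 < x.1 -> sums_of W_atoms (x - e_z R k)).
Proof.
elim: n x => [|n IH] x Wx.
  split=> [|gt1]; last by apply: sums_of_base; right; right; exists x.
  by have [l [Hl ->]] := W1_sums_of_gens Wx; exists l; split => // y /Hl; left.
elim: Wx => [y [/IH // | [b [Hb ->]]] | y z Wy IHy Wz IHz].
  have atoms_b i : sums_of W_atoms (b i - e_z R k) by case: (Hb i) => Wb gt1; apply: (IH _ Wb).2.
  have sum_atoms : sums_of W_atoms (\sum_(i < n.+2) b i - (n.+1%:R, 0) - e_z R k).
    have -> : \sum_(i < n.+2) b i - (n.+1%:R, 0) - e_z R k = \sum_(i < n.+2) (b i - e_z R k).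
      by rewrite sumrB sumr_const card_ord natr_expo -addrA -opprD -mulrSr.
    exact: sums_of_sum.
  split=> [|_ //]; rewrite -(subrK (e_z R k) (_ - _)).
  by apply: sums_ofD sum_atoms _; apply: sums_of_base; right; left.
split=> [|gt1]; first exact: sums_ofD IHy.1 IHz.1.
have [y_gt1|y_le1] := ltrP 1 y.1; first by rewrite addrAC; apply: sums_ofD (IHy.2 y_gt1) IHz.1.
have [z_gt1|z_le1] := ltrP 1 z.1; first by rewrite -addrA; apply: sums_ofD IHy.1 (IHz.2 z_gt1).
apply: sums_of_base; right; right; exists (y + z); split => //.
by apply: sg_add; apply: (Wseq_fst_le1 (n := n.+1)).
Qed.

Lemma W_wo : well_ordered (W c lam).
Proof.
apply: (wo_sub _ (neumann W_atoms_pos W_atoms_wo)).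
by move=> x [n Wx]; apply: (Wseq_sums_of_atoms Wx).1.
Qed.

Lemma Wbeta_shifted_sum beta m (b : 'I_m.+1 -> expo R k) : 1 < beta ->
  (forall i, Wbeta c lam beta (b i)) -> Wbeta c lam beta (\sum_(i < m.+1) b i - (m%:R, 0)).
Proof.
move=> beta_gt1; elim: m b => [|m IH] b Wb; first by rewrite big_ord1 subr0.
have [W_init init_ge] := IH (fun i => b (widen_ord (leqnSn _) i)) (fun i => Wb _).
have [W_last last_ge] := Wb ord_max.
rewrite big_ord_recr /= natr_expo mulrSr opprD addrA -natr_expo (addrAC _ (b ord_max)).
split.
  by apply: W_closed_shifted_add => //; apply: lt_le_trans beta_gt1 _.
rewrite /= -[beta]addr0 -(subrr 1) addrA lerB // lerD //.
exact: le_trans (ltW beta_gt1) last_ge.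
Qed.

End WStructure.

Unset Implicit Arguments. Set Strict Implicit.

Theorem proposition5p1 (R : realType) (k : nat) (c : R -> 'rV[int]_k -> R)
    (lam beta : R) :
  in_Lk c -> leading_lambda_z c lam -> 0 < lam -> lam < 1 -> 1 < beta ->
  well_ordered (Wbeta c lam beta) /\
  forall (m : nat) (b : 'I_m -> expo R k), (2 <= m)%N ->
    (forall i, Wbeta c lam beta (b i)) ->
    Wbeta c lam beta (\sum_(i < m) b i - ((m.-1)%:R, 0)).
Proof.
move=> in_Lk_c lead_c _ _ beta_gt1; split.
  by apply: wo_sub (W_wo in_Lk_c lead_c) => x [].
by case=> [//|m] b _; apply: Wbeta_shifted_sum.
Qed.
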